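(* Let $k\ge 2$ be even and $n>k/2$. Any encoding that, given access to encodings of both rows of a $2\times n$ array $A$ answering unsorted (or sorted) 1-sided Top-$k$ queries on each row, answers all unsorted 3-sided Top-$k$ queries on $A$ must use at least $\lceil (n-k/2)\lg(1+\sqrt2)\rceil-o(n)\approx 1.27(n-k/2)-o(n)$ additional bits (in the worst case over arrays $A$). Equivalently, there is a family of $2\times n$ arrays with distinct entries, all of whose rows give identical answers to every 1-sided Top-$k$ query on that row, containing at least $2^{(n-k/2)\lg(1+\sqrt2)-o(n)}$ arrays with pairwise distinct answer sets to the unsorted 3-sided Top-$k$ queries.
   Context: All arrays have pairwise distinct entries from a totally ordered set. For a 1D array $B[1..n]$, the 1-sided query Top-$k(1,i,B)$ returns the positions of the $k$ largest values of $B[1..i]$ (all positions if $i\le k$); sorted queries report these positions in decreasing order of value, unsorted queries in arbitrary order. For a $2\times n$ array $A$, a 3-sided Top-$k$ query Top-$k(r,s,1,b,A)$ with $1\le r\le s\le 2$, $1\le b\le n$ returns the positions of the $k$ largest values in $A[r..s][1..b]$ (rows $r..s$, columns $1..b$). ''Additional bits'' means the length of the bit string that, together with the given row encodings, determines all answers. *)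

From Stdlib Require Import Reals.
From mathcomp Require Import all_boot.
Set Implicit Arguments. Unset Strict Implicit. Unset Printing Implicit Defensive.

(* With distinct values this is exactly the set of positions of the k largest
   values in S (all of S if #|S| <= k). *)
Definition topk (P : finType) (k : nat) (v : P -> nat) (S : {set P}) : {set P} :=
  [set p in S | #|[set q in S | v p < v q]| < k].

Definition topk_sorted (P : finType) (k : nat) (v : P -> nat) (S : {set P})
  : seq P := sort (fun p q => v q <= v p) (enum (topk k v S)).

(* 2 x n arrays with entries in nat (a totally ordered set); rows indexed by
   'I_2 (row 1 = 0, row 2 = 1), columns by 'I_n (column j+1 = j). *)
Definition array2 (n : nat) := 'I_2 -> 'I_n -> nat.

Definition distinct_entries n (A : array2 n) : Prop :=
  injective (fun p : 'I_2 * 'I_n => A p.1 p.2).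

Definition prefix n (i : nat) : {set 'I_n} := [set j : 'I_n | j < i].

Definition onesided_sorted n (k : nat) (B : 'I_n -> nat) (i : nat) : seq 'I_n :=
  topk_sorted k B (prefix n i).

Definition onesided n (k : nat) (B : 'I_n -> nat) (i : nat) : {set 'I_n} :=
  topk k B (prefix n i).

Definition same_rows n (k : nat) (B C : 'I_n -> nat) : Prop :=
  forall i, 1 <= i <= n ->
    onesided_sorted k B i = onesided_sorted k C i /\ onesided k B i = onesided k C i.

Definition region n (r s : 'I_2) (b : nat) : {set 'I_2 * 'I_n} :=
  [set p : 'I_2 * 'I_n | (r <= p.1 <= s) && (p.2 < b)].

(* All answers of unsorted 3-sided Top-k queries Top-k(r,s,1,b,A),
   1 <= r <= s <= 2, 1 <= b <= n; invalid indices are mapped to set0. *)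
Definition answers3 n (k : nat) (A : array2 n)
  : {ffun 'I_2 * 'I_2 * 'I_n.+1 -> {set 'I_2 * 'I_n}} :=
  [ffun q : 'I_2 * 'I_2 * 'I_n.+1 => let: (r, s, b) := q in
     if (r <= s) && (1 <= b) then topk k (fun p => A p.1 p.2) (region n r s b)
     else set0].

Definition lg (x : R) : R := Rdiv (ln x) (ln 2).

Definition big_enough (cnt n k : nat) (eps : R) : Prop :=
  Rle (Rpower 2 (Rminus (Rmult (Rminus (INR n) (Rdiv (INR k) 2)) (lg (Rplus 1 (sqrt 2)))) (Rmult eps (INR n)))) (INR cnt).

From Stdlib Require Import Reals Lra FunctionalExtensionality.
From mathcomp Require Import all_boot zify.
Set Implicit Arguments. Unset Strict Implicit.

(* Every array we build has two strictly increasing rows, so all its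
   1-sided answers coincide with those of any other such array; only the
   interleaving of the two rows is free.  We encode a walk
   c : nat -> {0,1,2} with |c j - c (j+1)| <= 1 into an interleaving:
   row 1 holds even values row0 c i, row 2 odd values row1 c j, and the
   value c m (for m >= 1) fixes which row-2 entries lie below the
   row-1 entries at columns m-1, m, m+1 (lemmas row1_below_row0 and
   row0_below_row1).  If two walks first differ at m, with c m < c' m,
   then the row-1 position in column m+1-c' m is among the top k of
   both rows restricted to the first m+K columns for c', but not for c
   (lemmas query_in / query_out), so the 3-sided answers differ.
   Finally the walks of length n - K starting next to 1 are enumerated
   (walks), shown to be duplicate-free, and counted: there are at least
   (1 + sqrt 2)^(n-K) of them, which gives the bound with no o(n) loss. *)

Lemma count_iota_le (P : pred nat) v b :
  (forall j, j < v -> ~~ P j) -> count P (iota 0 b) <= b - v.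
Proof.
move=> notP; case: (leqP v b) => [le_vb|lt_bv]; last first.
  rewrite (eq_in_count (a2 := pred0)) ?count_pred0 // => j.
  by rewrite mem_iota => /andP [_ lt_jb]; apply/negbTE/notP; lia.
rewrite -(subnKC le_vb) iotaD count_cat add0n.
rewrite (eq_in_count (a2 := pred0)) ?count_pred0; last first.
  by move=> j; rewrite mem_iota => /andP [_ lt_jv]; apply/negbTE/notP; lia.
by rewrite add0n (leq_trans (count_size _ _)) ?size_iota // subnKC ?subnn.
Qed.

Lemma count_iota_ge (P : pred nat) v b :
  (forall j, v <= j < b -> P j) -> b - v <= count P (iota 0 b).
Proof.
move=> yesP; case: (leqP v b) => [le_vb|lt_bv]; last by have -> : b - v = 0 by lia.
rewrite -{2}(subnKC le_vb) iotaD count_cat add0n.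
rewrite (@eq_in_count _ _ predT (iota v (b - v))) ?count_predT ?size_iota ?leq_addl //.
by move=> j; rewrite mem_iota => /andP [? ?]; apply: yesP; lia.
Qed.

Lemma count_iota_gt u b : count (fun j => u < j) (iota 0 b) = b - u.+1.
Proof.
apply/eqP; rewrite eqn_leq count_iota_le ?count_iota_ge //.
- by move=> j /andP [].
- by move=> j; rewrite -leqNgt.
Qed.

Definition increasing (f : nat -> nat) := forall i, f i < f i.+1.

Lemma increasing_leq f : increasing f -> {mono f : i j / i <= j}.
Proof. by move=> f_incr; apply: leq_mono; apply: homo_ltn => //; exact: ltn_trans. Qed.

Lemma increasing_ltn f : increasing f -> {mono f : i j / i < j}.
Proof. by move/increasing_leq/leqW_mono. Qed.

Lemma increasing_inj f : increasing f -> injective f.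
Proof. by move/increasing_leq/incn_inj. Qed.

Definition array_of n (a bb : nat -> nat) : array2 n :=
  fun r j => if r == 0 :> nat then a j else bb j.

Lemma count_prefix n b (P : pred nat) :
  b <= n -> \sum_(j < n | (j < b) && P j) 1 = count P (iota 0 b).
Proof.
move=> le_bn; rewrite -sum1_count -{2}(subn0 b) -/(index_iota 0 b).
rewrite (big_nat_widen _ _ _ _ _ le_bn) big_mkord.
by apply: eq_bigl => j; rewrite andbC.
Qed.

Lemma card_region_above n (a bb : nat -> nat) b x : b <= n ->
  #|[set q in region n ord0 ord_max b | x < array_of a bb q.1 q.2]| =
  count (fun j => x < a j) (iota 0 b) + count (fun j => x < bb j) (iota 0 b).
Proof.
move=> le_bn; rewrite -!(@count_prefix n b) // -sum1_card.
rewrite (eq_bigl (fun q : 'I_2 * 'I_n =>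
  (q.2 < b) && (x < array_of a bb q.1 q.2))); last first.
  by case=> [[r lt_r2] j]; rewrite !inE /=; congr (_ && _); lia.
rewrite -(pair_big_dep xpredT
  (fun (r : 'I_2) (j : 'I_n) => (j < b) && (x < array_of a bb r j)) (fun _ _ => 1)).
rewrite big_ord_recl big_ord1 /=.
by congr (_ + _); apply: eq_bigl => j.
Qed.

(* When the first row increases, its entry in column u < b is a 3-sided
   Top-k answer on columns [0, b) iff fewer than k entries beat it: the
   b - u - 1 later entries of its own row, plus those of the second row. *)
Lemma mem_topk_row0 n k (a bb : nat -> nat) b u (lt_un : u < n) :
  increasing a -> u < b -> b <= n ->
  (((ord0 : 'I_2), Ordinal lt_un) \in
     topk k (fun p => array_of a bb p.1 p.2) (region n ord0 ord_max b)) =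
  (b - u.+1 + count (fun j => a u < bb j) (iota 0 b) < k).
Proof.
move=> a_incr lt_ub le_bn.
rewrite /topk inE [in X in X && _]inE /= lt_ub card_region_above //.
by rewrite /array_of /= (eq_count (a2 := fun j => u < j)) ?count_iota_gt //
  => j; rewrite increasing_ltn.
Qed.

Lemma topk_same_order (P : finType) k (f g : P -> nat) (S : {set P}) :
  (forall p q, (f p < f q) = (g p < g q)) -> topk k f S = topk k g S.
Proof.
move=> same_order; apply/setP => p; rewrite !inE.
by congr (_ && (_ < k)); apply: eq_card => q; rewrite !inE same_order.
Qed.

Lemma same_rows_of_order n k (f g : 'I_n -> nat) :
  (forall i j, (f i < f j) = (g i < g j)) -> same_rows k f g.
Proof.
move=> same_order i _; rewrite /onesided_sorted /onesided /topk_sorted.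
rewrite (topk_same_order _ _ same_order).
have -> : (fun p q => f q <= f p) = (fun p q => g q <= g p).
  by do 2 apply: functional_extensionality => ?; rewrite [LHS]leqNgt [RHS]leqNgt same_order.
by split.
Qed.

Definition close (x y : nat) := (x <= y.+1) && (y <= x.+1).
Definition walk (c : nat -> nat) := forall j, c j <= 2 /\ close (c j) (c j.+1).

(* The encoding of a walk c: column i of row 1 holds the even value
   row0 c i, column j of row 2 the odd value row1 c j, both within a
   window [8 i, 8 i + 11]; the offsets are chosen so that the relative
   order of neighbouring columns reflects the walk. *)
Definition off0 (c : nat -> nat) i := if c i.+1 == 2 then 5 else if c i == 0 then 0 else 2.
Definition off1 (c : nat -> nat) j := if c j.+1 == 0 then 5 else if c j == 2 then 0 else 2.
Definition row0 c i := 2 * (4 * i + off0 c i).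
Definition row1 c j := (2 * (4 * j + off1 c j)).+1.

Ltac offsets := rewrite /row0 /row1 /off0 /off1; repeat (case: eqP; intro); lia.

Lemma row0_increasing c : increasing (row0 c).
Proof. by move=> i; offsets. Qed.

Lemma row1_increasing c : increasing (row1 c).
Proof. by move=> i; offsets. Qed.

Lemma row0_neq_row1 c c' i j : row0 c i <> row1 c' j.
Proof. rewrite /row0 /row1; lia. Qed.

(* How the value t = c m, m >= 1, places the rows: row 2 up to column
   m + t - 2 lies below row 1 at column m + 1 - t (when t > 0), and row 1
   at column m - t lies below row 2 from column m + t - 1 on (when t < 2). *)
Section Interleaving.
Variable c : nat -> nat.
Hypothesis walk_c : walk c.

Lemma row1_below_row0 p : 0 < c p.+1 ->
  row1 c (p.+1 + c p.+1 - 2) < row0 c (p.+2 - c p.+1).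
Proof.
move=> pos_c; have [le_c2 /andP [close1 close2]] := walk_c p.+1.
have [E|E] : c p.+1 = 1 \/ c p.+1 = 2 by lia.
all: rewrite E ?addn1 ?addn2 ?subSS ?subn0; offsets.
Qed.

Lemma row0_below_row1 p : c p.+1 < 2 ->
  row0 c (p.+1 - c p.+1) < row1 c (p.+1 + c p.+1 - 1).
Proof.
move=> lt_c2; have [_ /andP [close1 close2]] := walk_c p.+1.
have [E|E] : c p.+1 = 0 \/ c p.+1 = 1 by lia.
all: rewrite E ?addn0 ?addn1 ?subSS ?subn0; offsets.
Qed.

End Interleaving.

Definition walk_array n (c : nat -> nat) : array2 n := array_of (row0 c) (row1 c).
Arguments walk_array : clear implicits.

Lemma walk_rows_same n k c c' (r : 'I_2) :
  same_rows k (walk_array n c r) (walk_array n c' r).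
Proof.
apply: same_rows_of_order => i j; rewrite /walk_array /array_of.
by case: (r == 0 :> nat);
  rewrite ?(increasing_ltn (row0_increasing _)) ?(increasing_ltn (row1_increasing _)).
Qed.

Lemma walk_array_distinct n c : distinct_entries (walk_array n c).
Proof.
move=> [r i] [r' j]; rewrite /walk_array /array_of /=.
case: r r' => [[|[|r]] lt_r] [[|[|r']] lt_r'] //= eq_val.
- have /val_inj eq_ij := increasing_inj (row0_increasing c) eq_val.
  by congr pair; [apply: val_inj | exact: eq_ij].
- by case: (row0_neq_row1 eq_val).
- by case: (row0_neq_row1 (esym eq_val)).
- have /val_inj eq_ij := increasing_inj (row1_increasing c) eq_val.
  by congr pair; [apply: val_inj | exact: eq_ij].
Qed.

Section Query.
Variables (n k K p : nat) (c : nat -> nat).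
Hypotheses (walk_c : walk c) (K_pos : 0 < K) (le_bn : p.+1 + K <= n).

Local Notation query := (topk k (fun q => walk_array n c q.1 q.2)
  (region n ord0 ord_max (p.+1 + K))).

Lemma query_in (lt_un : p.+2 - c p.+1 < n) :
  K + K <= k -> 0 < c p.+1 -> ((ord0 : 'I_2), Ordinal lt_un) \in query.
Proof.
move=> le_k pos_c; have [le_c2 _] := walk_c p.+1.
rewrite mem_topk_row0; [| exact: row0_increasing | lia | lia].
set v := p.+1 + c p.+1 - 1.
have above : count (fun j => row0 c (p.+2 - c p.+1) < row1 c j) (iota 0 (p.+1 + K))
    <= p.+1 + K - v.
  apply: count_iota_le => j lt_jv; rewrite -leqNgt.
  apply/ltnW; apply: (leq_ltn_trans _ (row1_below_row0 walk_c pos_c)).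
  by rewrite (increasing_leq (row1_increasing c)) //; lia.
lia.
Qed.

Lemma query_out t (lt_un : p.+2 - t < n) :
  k <= K + K -> c p.+1 < t -> t <= 2 -> ((ord0 : 'I_2), Ordinal lt_un) \notin query.
Proof.
move=> le_k lt_ct le_t2.
rewrite mem_topk_row0; [| exact: row0_increasing | lia | lia].
set v := p.+1 + c p.+1 - 1.
have below : p.+1 + K - v
    <= count (fun j => row0 c (p.+2 - t) < row1 c j) (iota 0 (p.+1 + K)).
  apply: count_iota_ge => j /andP [le_vj _].
  have row0_below := row0_below_row1 walk_c (leq_trans lt_ct le_t2).
  apply: (@leq_ltn_trans (row0 c (p.+1 - c p.+1))).
    by rewrite (increasing_leq (row0_increasing c)) //; lia.
  by apply: (leq_trans row0_below); rewrite (increasing_leq (row1_increasing c)).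
lia.
Qed.

End Query.

Lemma walks_separated n k K p c c' :
  walk c -> walk c' -> 0 < K -> k = K + K -> p.+1 + K <= n -> c p.+1 < c' p.+1 ->
  answers3 k (walk_array n c) <> answers3 k (walk_array n c').
Proof.
move=> walk_c walk_c' K_pos k_eq le_bn lt_cc' same_answers.
have lt_bn : p.+1 + K < n.+1 by lia.
have lt_un : p.+2 - c' p.+1 < n by lia.
have := congr1 (fun f : {ffun _ -> _} => f ((ord0 : 'I_2), (ord_max : 'I_2), Ordinal lt_bn))
  same_answers.
rewrite !ffunE /= => same_query.
have [le_c'2 _] := walk_c' p.+1.
have := query_out walk_c K_pos le_bn lt_un (eq_leq k_eq) lt_cc' le_c'2.
by rewrite same_query (query_in walk_c' K_pos le_bn) ?k_eq //; lia.
Qed.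

Definition walk_of (s : seq nat) : nat -> nat := nth 1 (1 :: s).

Lemma walk_of_path s : path close 1 s -> all (fun x => x <= 2) s -> walk (walk_of s).
Proof.
move=> /(pathP 1) close_s /allP le2_s.
have le2 j : walk_of s j <= 2.
  rewrite /walk_of; case: j => [|j] //=; case: (ltnP j (size s)) => [lt_js|le_sj].
    by apply/le2_s/mem_nth.
  by rewrite nth_default.
move=> j; split=> //; case: (ltnP j (size s)) => [lt_js|le_sj]; first exact: close_s.
by move: (le2 j); rewrite /close /walk_of /= [nth 1 s j]nth_default //; lia.
Qed.

Definition nbrs x := [seq y <- iota 0 3 | close x y].

Fixpoint walks m x : seq (seq nat) :=
  if m is m'.+1 then flatten [seq map (cons y) (walks m' y) | y <- nbrs x]
  else [:: [::]].

Lemma mem_flatten_cons (ys : seq nat) (L : nat -> seq (seq nat)) s :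
  (s \in flatten [seq map (cons y) (L y) | y <- ys]) =
  if s is y :: t then (y \in ys) && (t \in L y) else false.
Proof.
elim: ys => [|z ys IH] /=; first by case: s.
rewrite mem_cat {}IH; case: s => [|y t].
  by rewrite orbF; apply/negbTE/mapP => -[].
have -> : (y :: t \in map (cons z) (L z)) = (y == z) && (t \in L z).
  by apply/mapP/andP => [[t' t'L [-> ->]]|[/eqP -> tL]]; [|exists t].
rewrite inE; case: eqP => [->|_] //=.
by apply/orb_idr => /andP [].
Qed.

Lemma mem_walks m x s :
  (s \in walks m x) = [&& size s == m, path close x s & all (fun y => y <= 2) s].
Proof.
elim: m x s => [|m IH] x [|y t] //=; rewrite mem_flatten_cons //.
rewrite IH mem_filter mem_iota eqSS ltnS.
by case: (close x y); case: (y <= 2); rewrite /= ?andbF.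
Qed.

Lemma walks_uniq m x : uniq (walks m x).
Proof.
elim: m x => [|m IH] x //=.
have : uniq (nbrs x) by rewrite filter_uniq ?iota_uniq.
elim: (nbrs x) => [|y ys IHys] //= /andP [y_ys uniq_ys].
rewrite cat_uniq map_inj_uniq ?IH ?IHys //=; last by move=> t t' [].
rewrite andbT has_sym; apply/hasPn => _ /mapP [t _ ->].
by rewrite mem_flatten_cons (negbTE y_ys).
Qed.

Lemma size_walks m x :
  size (walks m.+1 x) = sumn [seq size (walks m y) | y <- nbrs x].
Proof.
rewrite /= size_flatten /shape -map_comp; congr sumn.
by apply: eq_map => y /=; rewrite size_map.
Qed.

Lemma answers_injective n k K : 0 < K -> k = K + K ->
  {in walks (n - K) 1 &, injective (fun s => answers3 k (walk_array n (walk_of s)))}.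
Proof.
move=> K_pos k_eq s s'; rewrite !mem_walks.
move=> /and3P [/eqP size_s path_s le2_s] /and3P [/eqP size_s' path_s' le2_s'] same.
have walk_s := walk_of_path path_s le2_s; have walk_s' := walk_of_path path_s' le2_s'.
apply: (eq_from_nth (x0 := 1)) => [|p lt_p]; first by rewrite size_s size_s'.
have le_bn : p.+1 + K <= n by move: lt_p; rewrite size_s; lia.
case: (ltngtP (nth 1 s p) (nth 1 s' p)) => // lt_ss'.
- by case: (walks_separated walk_s walk_s' K_pos k_eq le_bn lt_ss' same).
- by case: (walks_separated walk_s' walk_s K_pos k_eq le_bn lt_ss' (esym same)).
Qed.

Section Growth.
Local Open Scope R_scope.

(* With a m, z m, w m the numbers of walks of length m continuing from
   1, 0, 2: a (m+1) = z m + a m + w m and z (m+1) + w (m+1) = 2 a m + z m + w m,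
   so both grow like (1 + sqrt 2)^m. *)
Lemma walks_growth m :
  (1 + sqrt 2) ^ m <= INR (size (walks m 1)) /\
  sqrt 2 * (1 + sqrt 2) ^ m <= INR (size (walks m 0)) + INR (size (walks m 2)).
Proof.
have sqrt2_sq : sqrt 2 * sqrt 2 = 2 by apply: sqrt_sqrt; lra.
have sqrt2_pos := Rlt_sqrt2_0.
elim: m => [|m [IH1 IH2]]; first by rewrite /=; nra.
rewrite !size_walks /= !addn0 !plus_INR.
have pow_pos : 0 <= (1 + sqrt 2) ^ m by apply: pow_le; lra.
split; nra.
Qed.

Lemma big_enough_of cnt n k M K eps :
  0 < eps -> k = (K + K)%N -> n = (M + K)%N ->
  (1 + sqrt 2) ^ M <= INR cnt -> big_enough cnt n k eps.
Proof.
move=> eps_pos k_eq n_eq growth; rewrite /big_enough /lg.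
have lambda_pos : 0 < 1 + sqrt 2 by have := Rlt_sqrt2_0; lra.
have ln2_pos : 0 < ln 2 by rewrite -ln_1; apply: ln_increasing; lra.
have -> : INR n - INR k / 2 = INR M by rewrite n_eq k_eq !plus_INR; field.
apply: Rle_trans growth; rewrite -Rpower_pow //.
have -> : Rpower (1 + sqrt 2) (INR M) = Rpower 2 (INR M * (ln (1 + sqrt 2) / ln 2)).
  by rewrite /Rpower; congr exp; field; lra.
apply: Rle_Rpower; first lra.
have := pos_INR n; nra.
Qed.

End Growth.

Theorem theorem10 :
  forall k : nat, 2 <= k -> ~~ odd k ->
  forall eps : R, Rlt 0 eps ->
  exists N : nat, forall n : nat, N <= n -> k./2 < n ->
    exists F : seq (array2 n),
      (forall A, List.In A F -> distinct_entries A) /\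
      (forall A B, List.In A F -> List.In B F ->
         forall r : 'I_2, same_rows k (A r) (B r)) /\
      uniq (map (answers3 k) F) /\
      big_enough (size F) n k eps.
Proof.
move=> k k_ge2 k_even eps eps_pos; exists 0 => n _ lt_Kn.
set K := k./2; set M := n - K.
have k_eq : k = K + K by rewrite addnn -[LHS](odd_double_half k) (negbTE k_even).
have K_pos : 0 < K by lia.
exists [seq walk_array n (walk_of s) | s <- walks M 1].
split; [|split; [|split]].
- by move=> A /List.in_map_iff [s [<- _]]; exact: walk_array_distinct.
- move=> A B /List.in_map_iff [s [<- _]] /List.in_map_iff [s' [<- _]] r.
  exact: walk_rows_same.
- rewrite -map_comp map_inj_in_uniq ?walks_uniq //.
  exact: answers_injective.
- rewrite size_map; apply: (big_enough_of (M := M) (K := K)) => //; first by lia.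
  by case: (walks_growth M).
Qed.
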